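(* Let $T$ and $\Sigma$ be sets with $t\in T$ and $p\in\Sigma$. There is no GKAT expression $e$ over $(\Sigma,T)$ such that for every set $S$, every $\tau:T\to2^S$ and every $\sigma$ assigning to each action a partial function $S\rightharpoonup S$, we have $[\![e]\!]^\sigma_\tau=F^\sigma_\tau$.
   Context: Tests $\mathsf{BA}$: $b::=\mathsf{false}\mid\mathsf{true}\mid t\in T\mid b\ \mathsf{or}\ c\mid b\ \mathsf{and}\ c\mid\mathsf{not}\ b$, interpreted via $\tau:T\to2^S$ as subsets $[\![b]\!]_\tau\subseteq S$ in the obvious Boolean way. GKAT expressions: $e::=\mathsf{assert}\ b\mid p\in\Sigma\mid e;f\mid\mathsf{if}\ b\ \mathsf{then}\ e\ \mathsf{else}\ f\mid\mathsf{while}\ b\ \mathsf{do}\ e$. Given $\tau$ and $\sigma:\Sigma\to(S\rightharpoonup S)$, $[\![e]\!]^\sigma_\tau:S\rightharpoonup S$ is: $[\![\mathsf{assert}\ b]\!](s)=s$ if $s\in[\![b]\!]_\tau$ (undefined otherwise); $[\![p]\!]=\sigma(p)$; $[\![e;f]\!](s)=[\![f]\!]([\![e]\!](s))$; $[\![\mathsf{if}\ b\ \mathsf{then}\ e\ \mathsf{else}\ f]\!](s)=[\![e]\!](s)$ if $s\in[\![b]\!]_\tau$, else $[\![f]\!](s)$; $[\![\mathsf{while}\ b\ \mathsf{do}\ e]\!]$ is the least (w.r.t. extension of partial functions) $g$ with $g(s)=g([\![e]\!](s))$ if $s\in[\![b]\!]_\tau$ and $g(s)=s$ otherwise. The program $F$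 (''repeat $p$ while $t$ changes''): given $S,\tau,\sigma$, let $(u,v)$ be the least pair of partial functions $S\rightharpoonup S$ satisfying $u(s)=s$ if $s\notin\tau(t)$, $u(s)=v(\sigma(p)(s))$ if $s\in\tau(t)$; $v(s)=s$ if $s\in\tau(t)$, $v(s)=u(\sigma(p)(s))$ if $s\notin\tau(t)$. Then $F^\sigma_\tau(s)=v(\sigma(p)(s))$ if $s\in\tau(t)$ and $F^\sigma_\tau(s)=u(\sigma(p)(s))$ otherwise (undefined wherever the right-hand side is). *)

(* A partial function S ⇀ S is represented either as S -> option S (for the
   primitive actions sigma p) or, for derived meanings, as its graph
   S -> S -> Prop (graph relation: f s = Some r  <->  R s r).  Least fixed
   points (while loops, the pair (u,v) of F) are inductive predicates, i.e.
   the least relations closed under the defining equations. *)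

Set Implicit Arguments.

Inductive BExp (T : Type) : Type :=
| BFalse : BExp T
| BTrue : BExp T
| BPrim : T -> BExp T
| BOr : BExp T -> BExp T -> BExp T
| BAnd : BExp T -> BExp T -> BExp T
| BNot : BExp T -> BExp T.

Arguments BFalse {T}.
Arguments BTrue {T}.

Fixpoint bsem (T S : Type) (tau : T -> S -> Prop) (b : BExp T) (s : S) : Prop :=
  match b with
  | BFalse => False
  | BTrue => True
  | BPrim t => tau t s
  | BOr b c => bsem tau b s \/ bsem tau c s
  | BAnd b c => bsem tau b s /\ bsem tau c s
  | BNot b => ~ bsem tau b s
  end.

Inductive GExp (Sigma T : Type) : Type :=
| GAssert : BExp T -> GExp Sigma T
| GAct : Sigma -> GExp Sigma T
| GSeq : GExp Sigma T -> GExp Sigma T -> GExp Sigma T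
| GIf : BExp T -> GExp Sigma T -> GExp Sigma T -> GExp Sigma T
| GWhile : BExp T -> GExp Sigma T -> GExp Sigma T.

(* [[e]]^sigma_tau as the graph of a partial function:  gsem e s r  iff
   [[e]](s) is defined and equals r. *)
Inductive gsem (Sigma T S : Type) (tau : T -> S -> Prop)
    (sigma : Sigma -> S -> option S) : GExp Sigma T -> S -> S -> Prop :=
| gsem_assert : forall b s, bsem tau b s -> gsem tau sigma (GAssert Sigma b) s s
| gsem_act : forall p s r, sigma p s = Some r -> gsem tau sigma (GAct T p) s r
| gsem_seq : forall e f s m r,
    gsem tau sigma e s m -> gsem tau sigma f m r -> gsem tau sigma (GSeq e f) s r
| gsem_if_t : forall b e f s r,
    bsem tau b s -> gsem tau sigma e s r -> gsem tau sigma (GIf b e f) s r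
| gsem_if_f : forall b e f s r,
    ~ bsem tau b s -> gsem tau sigma f s r -> gsem tau sigma (GIf b e f) s r
| gsem_while_done : forall b e s,
    ~ bsem tau b s -> gsem tau sigma (GWhile b e) s s
| gsem_while_step : forall b e s m r,
    bsem tau b s -> gsem tau sigma e s m -> gsem tau sigma (GWhile b e) m r ->
    gsem tau sigma (GWhile b e) s r.

Inductive Frel_u (Sigma T S : Type) (tau : T -> S -> Prop)
    (sigma : Sigma -> S -> option S) (t : T) (p : Sigma) : S -> S -> Prop :=
| Fu_out : forall s, ~ tau t s -> Frel_u tau sigma t p s s
| Fu_in : forall s s' r, tau t s -> sigma p s = Some s' ->
    Frel_v tau sigma t p s' r -> Frel_u tau sigma t p s r
with Frel_v (Sigma T S : Type) (tau : T -> S -> Prop)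
    (sigma : Sigma -> S -> option S) (t : T) (p : Sigma) : S -> S -> Prop :=
| Fv_in : forall s, tau t s -> Frel_v tau sigma t p s s
| Fv_out : forall s s' r, ~ tau t s -> sigma p s = Some s' ->
    Frel_u tau sigma t p s' r -> Frel_v tau sigma t p s r.

(* F^sigma_tau ("repeat p while t changes") as the graph of a partial function. *)
Definition Fsem (Sigma T S : Type) (tau : T -> S -> Prop)
    (sigma : Sigma -> S -> option S) (t : T) (p : Sigma) (s r : S) : Prop :=
  (tau t s -> exists s', sigma p s = Some s' /\ Frel_v tau sigma t p s' r) /\
  (~ tau t s -> exists s', sigma p s = Some s' /\ Frel_u tau sigma t p s' r).

From Stdlib Require Import PeanoNat Lia Classical.

(* Interpret every action as the successor map on nat and every primitive test
   by one bit sequence W.  Under [stutter m], whose bits alternate up to m - 1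
   and then stay constant, F started at 0 halts exactly at m >= 1.  A GKAT
   expression started at i only reads the bits on [i, r], r its final state,
   so by induction on the expression none can end at m under [stutter m] for
   all large m.  The crux is the loop: it exits at m, where the bit is
   [Nat.even (m - 1)], so for two consecutive m its guard fails on both bit
   values, hence everywhere, and the loop never iterates. *)

Section Semantics.
Context {Sigma T S : Type} {tau : T -> S -> Prop} {sigma : Sigma -> S -> option S}.

Lemma gsem_functional {e : GExp Sigma T} {s r r' : S} :
  gsem tau sigma e s r -> gsem tau sigma e s r' -> r = r'.
Proof.
  intros H; revert r'.
  induction H as [b s Hb|p s r Hp|e f s m r He IHe Hf IHf
    |b e f s r Hb He IHe|b e f s r Hb Hf IHf|b e s Hb|b e s m r Hb He IHe Hw IHw];
    intros r' H'; inversion H' as [| | ? ? ? m' ? He' Hf' | | | | ? ? ? m' ? ? He' Hw'];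
    subst; try tauto; try congruence; eauto.
  all: rewrite <- (IHe _ He') in *; eauto.
Qed.

Lemma gsem_while_exit {b : BExp T} {e : GExp Sigma T} {s r : S} :
  gsem tau sigma (GWhile b e) s r -> ~ bsem tau b r.
Proof.
  remember (GWhile b e) as w eqn:Hw; induction 1; inversion Hw; subst; auto.
Qed.

Lemma gsem_while_skip {b : BExp T} {e : GExp Sigma T} {s r : S} :
  ~ bsem tau b s -> gsem tau sigma (GWhile b e) s r -> r = s.
Proof. intros Hb H; inversion H; subst; tauto. Qed.

End Semantics.

Definition stutter (m n : nat) : bool := Nat.even (Nat.min n (m - 1)).

Lemma stutter_lt m n : n < m -> stutter m n = Nat.even n.
Proof. intros; unfold stutter; rewrite Nat.min_l; auto; lia. Qed.

Lemma stutter_diag m : stutter m m = Nat.even (m - 1).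
Proof. unfold stutter; rewrite Nat.min_r; auto; lia. Qed.

Lemma even_succ_negb n : Nat.even (S n) = negb (Nat.even n).
Proof. rewrite Nat.even_succ, <- Nat.negb_even; reflexivity. Qed.

Section CounterModel.
Context {Sigma T : Type}.

Definition counter_tests (W : nat -> bool) : T -> nat -> Prop := fun _ n => W n = true.
Definition counter_step : Sigma -> nat -> option nat := fun _ n => Some (S n).

Definition run (e : GExp Sigma T) (W : nat -> bool) : nat -> nat -> Prop :=
  gsem (counter_tests W) counter_step e.

Lemma bsem_counter_congr (c : BExp T) W W' n n' :
  W n = W' n' -> bsem (counter_tests W) c n <-> bsem (counter_tests W') c n'.
Proof. intros Hn; induction c; simpl; unfold counter_tests in *; try rewrite Hn; tauto. Qed.

Lemma run_mono {e W i r} : run e W i r -> i <= r.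
Proof. induction 1 as [| p s r Hp | | | | |]; try lia; injection Hp; lia. Qed.

Lemma run_local {e W W' i r} :
  run e W i r -> (forall n, i <= n <= r -> W n = W' n) -> run e W' i r.
Proof.
  unfold run; induction 1 as [b s Hb|p s r Hp|e f s m r He IHe Hf IHf
    |b e f s r Hb He IHe|b e f s r Hb Hf IHf|b e s Hb|b e s m r Hb He IHe Hw IHw];
    intros Hag.
  - apply gsem_assert.
    pose proof (bsem_counter_congr b W W' s s (Hag s ltac:(lia))); tauto.
  - apply gsem_act; exact Hp.
  - pose proof (run_mono He); pose proof (run_mono Hf).
    apply gsem_seq with m; [apply IHe | apply IHf]; intros; apply Hag; lia.
  - pose proof (run_mono He).
    pose proof (bsem_counter_congr b W W' s s (Hag s ltac:(lia))).
    apply gsem_if_t; [tauto |]; apply IHe; intros; apply Hag; lia.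
  - pose proof (run_mono Hf).
    pose proof (bsem_counter_congr b W W' s s (Hag s ltac:(lia))).
    apply gsem_if_f; [tauto |]; apply IHf; intros; apply Hag; lia.
  - apply gsem_while_done.
    pose proof (bsem_counter_congr b W W' s s (Hag s ltac:(lia))); tauto.
  - pose proof (run_mono He); pose proof (run_mono Hw).
    pose proof (bsem_counter_congr b W W' s s (Hag s ltac:(lia))).
    apply gsem_while_step with m; [tauto | apply IHe | apply IHw];
      intros; apply Hag; lia.
Qed.

Definition tracks_stutter (e : GExp Sigma T) (i : nat) : Prop :=
  exists M, forall m, M <= m -> run e (stutter m) i m.

Lemma not_tracks_pinned {e i} j :
  (forall m, run e (stutter m) i m -> m = j) -> ~ tracks_stutter e i.
Proof.
  intros Hpin [M HM]; specialize (Hpin (S (M + j)) (HM (S (M + j)) ltac:(lia))); lia.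
Qed.

Lemma tracks_seq {e1 e2 i} :
  tracks_stutter (GSeq e1 e2) i -> (exists k, tracks_stutter e2 k) \/ tracks_stutter e1 i.
Proof.
  intros [M HM].
  destruct (classic (exists k, run e1 Nat.even i k)) as [[k Hk] | Hdiv].
  - left; exists k, (Nat.max M (S k)); intros m Hm.
    assert (Hk' : run e1 (stutter m) i k).
    { apply (run_local Hk); intros n Hn; rewrite stutter_lt; auto; lia. }
    pose proof (HM m ltac:(lia)) as Hseq.
    inversion Hseq as [| | ? ? ? k' ? Hk'' Hk'm | | | |]; subst.
    rewrite (gsem_functional Hk' Hk''); exact Hk'm.
  - right; exists M; intros m Hm.
    pose proof (HM m Hm) as Hseq.
    inversion Hseq as [| | ? ? ? k ? Hk Hkm | | | |]; subst.
    destruct (Nat.eq_dec k m) as [-> | Hne]; [assumption |].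
    exfalso; apply Hdiv; exists k.
    pose proof (run_mono Hkm).
    apply (run_local Hk); intros n Hn; rewrite stutter_lt; auto; lia.
Qed.

Lemma tracks_if {b e1 e2 i} :
  tracks_stutter (GIf b e1 e2) i -> tracks_stutter e1 i \/ tracks_stutter e2 i.
Proof.
  intros [M HM].
  assert (Hguard : forall m, i < m ->
    bsem (counter_tests (stutter m)) b i <-> bsem (counter_tests Nat.even) b i).
  { intros m Hm; apply bsem_counter_congr, stutter_lt, Hm. }
  destruct (classic (bsem (counter_tests Nat.even) b i)) as [Hb | Hb];
    [left | right]; exists (Nat.max M (S i)); intros m Hm;
    pose proof (HM m ltac:(lia)) as Hbranch; pose proof (Hguard m ltac:(lia));
    inversion Hbranch; subst; tauto.
Qed.

Lemma not_tracks_while b e i : ~ tracks_stutter (GWhile b e) i.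
Proof.
  intros Htr; pose proof Htr as [M HM].
  assert (Hexit : forall m, M <= m -> ~ bsem (counter_tests (stutter m)) b m)
    by (intros m Hm; exact (gsem_while_exit (HM m Hm))).
  assert (Hguard : forall W n, ~ bsem (counter_tests W) b n).
  { intros W n Hb.
    assert (Hbit : W n = stutter (S M) (S M) \/ W n = stutter (S (S M)) (S (S M))).
    { rewrite !stutter_diag; replace (S M - 1) with M by lia.
      replace (S (S M) - 1) with (S M) by lia; rewrite even_succ_negb.
      destruct (W n), (Nat.even M); auto. }
    destruct Hbit as [Hbit | Hbit];
      [apply (Hexit (S M)) | apply (Hexit (S (S M)))]; try lia;
      pose proof (bsem_counter_congr b _ _ _ _ Hbit); tauto. }
  revert Htr; apply (not_tracks_pinned i); intros m Hm.
  exact (gsem_while_skip (Hguard _ i) Hm).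
Qed.

Lemma not_tracks_stutter e i : ~ tracks_stutter e i.
Proof.
  revert i; induction e as [b | p | e1 IH1 e2 IH2 | b e1 IH1 e2 IH2 | b e IH]; intros i.
  - apply (not_tracks_pinned i); intros m Hm; inversion Hm; auto.
  - apply (not_tracks_pinned (S i)); intros m Hm; inversion Hm as [| ? ? ? Hp | | | | |].
    unfold counter_step in Hp; congruence.
  - intros Htr; destruct (tracks_seq Htr) as [[k Hk] | Hi]; [apply (IH2 k) | apply (IH1 i)]; auto.
  - intros Htr; destruct (tracks_if Htr); [apply (IH1 i) | apply (IH2 i)]; auto.
  - apply not_tracks_while.
Qed.

Lemma Frel_stutter (t : T) (p : Sigma) m k : k < m ->
  if stutter m k
  then Frel_v (counter_tests (stutter m)) counter_step t p (S k) m
  else Frel_u (counter_tests (stutter m)) counter_step t p (S k) m.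
Proof.
  intros Hk; remember (m - S k) as d eqn:Hd; revert k Hk Hd; induction d; intros k Hk Hd.
  - assert (Hm : m = S k) by lia; subst m.
    assert (Hstop : stutter (S k) (S k) = stutter (S k) k)
      by (rewrite stutter_diag, stutter_lt by lia; f_equal; lia).
    destruct (stutter (S k) k); constructor; unfold counter_tests; congruence.
  - assert (Hflip : stutter m (S k) = negb (stutter m k))
      by (rewrite !stutter_lt by lia; apply even_succ_negb).
    specialize (IHd (S k) ltac:(lia) ltac:(lia)); rewrite Hflip in IHd.
    unfold counter_tests; destruct (stutter m k); simpl in Hflip, IHd.
    + apply Fv_out with (S (S k)); [congruence | reflexivity | exact IHd].
    + apply Fu_in with (S (S k)); [congruence | reflexivity | exact IHd].
Qed.

End CounterModel.

Theorem theorem2p4 (Sigma T : Type) (t : T) (p : Sigma) :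
  ~ exists e : GExp Sigma T,
      forall (S : Type) (tau : T -> S -> Prop) (sigma : Sigma -> S -> option S)
             (s r : S),
        gsem tau sigma e s r <-> Fsem tau sigma t p s r.
Proof.
  intros [e He]; apply (not_tracks_stutter e 0); exists 1; intros m Hm.
  assert (Hstart : stutter m 0 = true) by (rewrite stutter_lt; auto; lia).
  apply He; split.
  - intros _; exists 1; split; [reflexivity |].
    pose proof (Frel_stutter t p m 0 Hm) as HF; rewrite Hstart in HF; exact HF.
  - intros Hout; exfalso; apply Hout; exact Hstart.
Qed.
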